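(* Let $r$ be a positive integer and let $W_r$ be the $r$-grid. Let $\mathcal{T}$ be the natural tangle of $W_r$, i.e.\ the set of all separations $(A,B)$ of $W_r$ of order less than $r$ such that $B$ contains (the vertex set of) a cross of $W_r$. Then every separation $(A,B)\in\mathcal{T}$ satisfies $|A|\leq s^2$, where $s:=|A\cap B|$ is the order of $(A,B)$.
   Context: For a positive integer $r$, the $r$-grid $W_r$ is the graph with vertex set $\{(i,j):1\le i,j\le r\}$ in which $(i,j)$ and $(i',j')$ are adjacent if and only if $|i-i'|+|j-j'|=1$. For $1\le j\le r$ the set $\{1,\dots,r\}\times\{j\}$ is the $j$th column, and for $1\le i\le r$ the set $\{i\}\times\{1,\dots,r\}$ is the $i$th row; the union of any row with any column is a cross. A separation of a graph $G$ is a pair $(A,B)$ of vertex sets with $A\cup B=V(G)$ such that no edge of $G$ joins $A\setminus B$ to $B\setminus A$; its order is $|A\cap B|$. *)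

From mathcomp Require Import all_boot.
Set Implicit Arguments. Unset Strict Implicit. Unset Printing Implicit Defensive.

(* Vertices of the r-grid W_r: pairs (i,j) with 0 <= i,j < r (0-indexed
   version of {1..r} x {1..r}). *)
Definition gvert (r : nat) : finType := ('I_r * 'I_r)%type.

Definition ndist (m n : nat) : nat := (m - n) + (n - m).
Definition grid_adj (r : nat) (u v : gvert r) : bool :=
  ndist u.1 v.1 + ndist u.2 v.2 == 1.

Definition grid_row (r : nat) (i : 'I_r) : {set gvert r} := [set v | v.1 == i].
Definition grid_col (r : nat) (j : 'I_r) : {set gvert r} := [set v | v.2 == j].
Definition is_cross (r : nat) (X : {set gvert r}) : Prop :=
  exists i j, X = grid_row i :|: grid_col j.

Definition is_separation (r : nat) (A B : {set gvert r}) : Prop :=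
  A :|: B = [set: gvert r] /\
  forall u v, u \in A :\: B -> v \in B :\: A -> ~~ grid_adj u v.

Definition sep_order (r : nat) (A B : {set gvert r}) : nat := #|A :&: B|.

Definition natural_tangle (r : nat) (A B : {set gvert r}) : Prop :=
  is_separation A B /\ sep_order A B < r /\
  exists X, is_cross X /\ X \subset B.

From mathcomp Require Import all_boot.

Set Implicit Arguments.
Unset Strict Implicit.
Unset Printing Implicit Defensive.

(* A separation cannot switch sides between two adjacent vertices outside its
   separator, so a row (or column) avoiding [A :&: B] lies entirely on one
   side.  The row and the column of any [v \in A] meet the cross in [B], hence
   both meet [A :&: B]: [v] is determined by a separator vertex sharing its row
   and one sharing its column, which gives [#|A| <= #|A :&: B| ^ 2]. *)

Lemma ndistC (m n : nat) : ndist m n = ndist n m.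
Proof. by rewrite /ndist addnC. Qed.

Lemma grid_adjC (r : nat) (u v : gvert r) : grid_adj u v = grid_adj v u.
Proof. by rewrite /grid_adj ndistC [ndist u.2 _]ndistC. Qed.

Lemma ndistnn (n : nat) : ndist n n = 0.
Proof. by rewrite /ndist subnn. Qed.

Lemma ndistSn (k : nat) : ndist k k.+1 = 1.
Proof. by rewrite /ndist subnS subnn subSnn. Qed.

Section SeparationSides.

Context {r : nat} {A B : {set gvert r}}.
Hypothesis sepAB : is_separation A B.

Lemma separation_adj_same_side (u v : gvert r) :
  grid_adj u v -> u \notin A :&: B -> v \notin A :&: B ->
  (u \in A) = (v \in A).
Proof.
case: sepAB => cover nadj.
have AorB x : (x \in A) || (x \in B) by rewrite -in_setU cover inE.
have oneway x y : grid_adj x y -> x \notin A :&: B -> x \in A -> y \in A.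
  move=> xy xS xA; apply/negPn/negP => yA.
  have xB : x \notin B by move: xS; rewrite inE xA.
  have yB : y \in B by move: (AorB y); rewrite (negPf yA).
  by move: (nadj x y); rewrite !inE xA xB yA yB xy => /(_ isT isT).
move=> uv uS vS; case uA: (u \in A); case vA: (v \in A) => //.
- by move: (oneway u v uv uS uA); rewrite vA.
- by move: (oneway v u); rewrite grid_adjC uv vS vA uA => /(_ isT isT isT).
Qed.

Lemma separation_path_same_side (L : nat -> gvert r) (n : nat) :
  (forall k, k < n -> grid_adj (L k) (L k.+1)) ->
  (forall k, k <= n -> L k \notin A :&: B) ->
  forall k, k <= n -> (L k \in A) = (L 0 \in A).
Proof.
move=> adjL avoidS; elim=> // k IH lt_kn.
rewrite -(IH (ltnW lt_kn)).
by apply/esym/separation_adj_same_side; [exact: adjL | apply: avoidS; exact: ltnW | exact: avoidS].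
Qed.

End SeparationSides.

Section GridLines.

Context {r : nat} {A B : {set gvert r.+1}}.
Hypothesis sepAB : is_separation A B.

Lemma separation_row_same_side (i j j' : 'I_r.+1) :
  i \notin [set v.1 | v in A :&: B] -> ((i, j) \in A) = ((i, j') \in A).
Proof.
move=> iS; pose L k : gvert r.+1 := (i, inord k).
have adjL k : k < r -> grid_adj (L k) (L k.+1).
  by move=> lt_kr; rewrite /grid_adj /= ndistnn !inordK ?ndistSn // ltnS (ltnW lt_kr).
have avoidS k : k <= r -> L k \notin A :&: B.
  by move=> _; apply: contra iS => LS; apply/imsetP; exists (L k).
have sideL := separation_path_same_side sepAB adjL avoidS.
by rewrite -[j]inord_val -[j']inord_val -/(L j) -/(L j') !sideL // -ltnS.
Qed.

Lemma separation_col_same_side (i i' j : 'I_r.+1) :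
  j \notin [set v.2 | v in A :&: B] -> ((i, j) \in A) = ((i', j) \in A).
Proof.
move=> jS; pose L k : gvert r.+1 := (inord k, j).
have adjL k : k < r -> grid_adj (L k) (L k.+1).
  by move=> lt_kr; rewrite /grid_adj /= ndistnn !inordK ?ndistSn // ltnS (ltnW lt_kr).
have avoidS k : k <= r -> L k \notin A :&: B.
  by move=> _; apply: contra jS => LS; apply/imsetP; exists (L k).
have sideL := separation_path_same_side sepAB adjL avoidS.
by rewrite -[i]inord_val -[i']inord_val -/(L i) -/(L i') !sideL // -ltnS.
Qed.

Lemma separation_side_subset_setX_proj (i0 j0 : 'I_r.+1) :
  grid_row i0 :|: grid_col j0 \subset B ->
  A \subset setX [set v.1 | v in A :&: B] [set v.2 | v in A :&: B].
Proof.
move=> crossB; apply/subsetP => -[i j] ijA; rewrite inE /=.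
have notA v : v \in B -> v \notin A :&: B -> v \notin A.
  by move=> vB; rewrite inE vB andbT.
apply/andP; split; apply/negPn/negP => lineS.
- have: (i, j0) \notin A.
    apply: notA; first by apply: (subsetP crossB); rewrite !inE eqxx orbT.
    by apply: contra lineS => ?; apply/imsetP; exists (i, j0).
  by rewrite -(separation_row_same_side j j0 lineS) ijA.
- have: (i0, j) \notin A.
    apply: notA; first by apply: (subsetP crossB); rewrite !inE eqxx.
    by apply: contra lineS => ?; apply/imsetP; exists (i0, j).
  by rewrite -(separation_col_same_side i i0 lineS) ijA.
Qed.

End GridLines.

Theorem lemma2 (r : nat) (hr : 0 < r) (A B : {set gvert r}) :
  natural_tangle A B -> #|A| <= (sep_order A B) ^ 2.
Proof.
case: r hr A B => // r _ A B [sepAB [_ [X [[i0 [j0 ->]] crossB]]]].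
apply: leq_trans (subset_leq_card (separation_side_subset_setX_proj sepAB crossB)) _.
by rewrite cardsX /sep_order expnS expn1 leq_mul ?leq_imset_card.
Qed.
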